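(* Let $I$ be a countable set with $|I|\ge2$, let each $\mathfrak{M}_i=(S_i,\mathcal{L}_i)$, $i\in I$, be a Veblenian gamma space all of whose lines have at least $4$ points, let $\mathfrak{M}=\bigotimes_{i\in I}\mathfrak{M}_i$ with point set $S$, and let $\mathcal{H}$ be a hyperplane of $\mathfrak{M}$. For $X\subseteq S$ the following are equivalent: (i) $X$ is a strong subspace of $\mathfrak{M}\setminus\mathcal{H}$; (ii) $X=a[i/Y_i]\setminus\mathcal{H}$ for some $a\in S$, $i\in I$ and a strong subspace $Y_i$ of $\mathfrak{M}_i$; (iii) $X=a[i/X_i]$ for some $a\in S$, $i\in I$ and a strong subspace $X_i$ of $\mathfrak{M}_i\setminus\mathcal{H}^{[a]}_i$.
   Context: A partial linear space is a pair $(S,\mathcal{L})$ of points and lines such that every line has at least two points, every point lies on a line, two distinct lines share at most one point; points are collinear if on a common line. A subspace is a set such that any line meeting it in at least two points lies in it; it is strong if any two of its points are collinear. A hyperplane is a proper subspace meeting every line. A gamma space is one in which the set of points collinear with any given point is a subspace. It is Veblenian if for any two distinct lines $L_1,L_2$ through a point $p$ and any two distinct lines $K_1,K_2$ not through $p$ such that each $K_j$ meets both $L_1,L_2$, the lines $K_1,K_2$ meet. Segre product: points $S=\prod_i S_i$; $a[i/x]$ is $a$ with $i$-th coordinate replaced by $x$, $a[i/A]=\{a[i/x]:x\in A\}$; lines $a[i/l]$, $l\in\mathcal{L}_i$. $\mathcal{H}^{[a]}_i=\{x\in S_i:a[i/x]\in\mathcal{H}\}$. For a subset $\mathcal{G}$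 of the points of a partial linear space $\mathfrak{N}$ which is a hyperplane or the whole point set, the complement $\mathfrak{N}\setminus\mathcal{G}$ has the points not in $\mathcal{G}$ and the lines $L\setminus\mathcal{G}$ for lines $L\not\subseteq\mathcal{G}$ (and parallelism: lines equivalent iff they meet $\mathcal{G}$ in the same point); subspaces and strong subspaces of a complement are taken with respect to these points and lines. *)

From mathcomp Require Import all_boot.
Unset Printing Implicit Defensive.

(* A point-line geometry: points are the elements of P satisfying Pts;
   lines are point sets (predicates on P) satisfying Ls.  Lines are compared
   extensionally (by their points). *)

Definition same_set {P : Type} (A B : P -> Prop) := forall x, A x <-> B x.

Definition is_pls {P : Type} (Ls : (P -> Prop) -> Prop) : Prop :=
  (forall L, Ls L -> exists x y, x <> y /\ L x /\ L y) /\
  (forall p, exists L, Ls L /\ L p) /\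
  (forall L K, Ls L -> Ls K -> ~ same_set L K ->
     forall x y, L x -> L y -> K x -> K y -> x = y).

Definition collinear {P : Type} (Ls : (P -> Prop) -> Prop) (x y : P) : Prop :=
  exists L, Ls L /\ L x /\ L y.

Definition subspace {P : Type} (Pts : P -> Prop) (Ls : (P -> Prop) -> Prop)
  (X : P -> Prop) : Prop :=
  (forall x, X x -> Pts x) /\
  (forall L, Ls L -> forall x y, x <> y -> L x -> L y -> X x -> X y ->
     forall z, L z -> X z).

Definition strong_subspace {P : Type} (Pts : P -> Prop) (Ls : (P -> Prop) -> Prop)
  (X : P -> Prop) : Prop :=
  subspace Pts Ls X /\ (forall x y, X x -> X y -> collinear Ls x y).

Definition allpts {P : Type} : P -> Prop := fun _ => True.

Definition hyperplane {P : Type} (Pts : P -> Prop) (Ls : (P -> Prop) -> Prop)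
  (H : P -> Prop) : Prop :=
  subspace Pts Ls H /\ (exists p, Pts p /\ ~ H p) /\
  (forall L, Ls L -> exists p, L p /\ H p).

Definition gamma_space {P : Type} (Ls : (P -> Prop) -> Prop) : Prop :=
  forall p, subspace allpts Ls (collinear Ls p).

Definition veblenian {P : Type} (Ls : (P -> Prop) -> Prop) : Prop :=
  forall (p : P) L1 L2 K1 K2, Ls L1 -> Ls L2 -> Ls K1 -> Ls K2 ->
    ~ same_set L1 L2 -> L1 p -> L2 p ->
    ~ same_set K1 K2 -> ~ K1 p -> ~ K2 p ->
    (exists x, K1 x /\ L1 x) -> (exists x, K1 x /\ L2 x) ->
    (exists x, K2 x /\ L1 x) -> (exists x, K2 x /\ L2 x) ->
    exists x, K1 x /\ K2 x.

Definition lines_ge4 {P : Type} (Ls : (P -> Prop) -> Prop) : Prop :=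
  forall L, Ls L -> exists x1 x2 x3 x4,
    (L x1 /\ L x2 /\ L x3 /\ L x4) /\
    (x1 <> x2 /\ x1 <> x3 /\ x1 <> x4 /\ x2 <> x3 /\ x2 <> x4 /\ x3 <> x4).

Definition comp_pts {P : Type} (Pts : P -> Prop) (G : P -> Prop) : P -> Prop :=
  fun x => Pts x /\ ~ G x.

Definition comp_lines {P : Type} (Ls : (P -> Prop) -> Prop) (G : P -> Prop)
  : (P -> Prop) -> Prop :=
  fun K => exists L, Ls L /\ (exists p, L p /\ ~ G p) /\
    (forall x, K x <-> (L x /\ ~ G x)).

Section Segre.
Variables (I : countType) (S : I -> Type).

Definition upd (a : forall j, S j) (i : I) (x : S i) : forall j, S j :=
  fun j => match i =P j with
           | ReflectT e => eq_rect i S x j e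
           | ReflectF _ => a j
           end.

Definition upd_set (a : forall j, S j) (i : I) (A : S i -> Prop)
  : (forall j, S j) -> Prop :=
  fun b => exists x, A x /\ b = upd a i x.

Definition segre_lines (Ls : forall i, (S i -> Prop) -> Prop)
  : ((forall j, S j) -> Prop) -> Prop :=
  fun K => exists (a : forall j, S j) (i : I) (l : S i -> Prop),
    Ls i l /\ (forall b, K b <-> upd_set a i l b).

Definition hsec (H : (forall j, S j) -> Prop) (a : forall j, S j) (i : I)
  : S i -> Prop := fun x => H (upd a i x).
End Segre.
Arguments upd {I S} a i x j.
Arguments upd_set {I S} a i A b.
Arguments segre_lines {I S} Ls K.
Arguments hsec {I S} H a i x.

From mathcomp Require Import all_boot.
From Stdlib Require Import Classical FunctionalExtensionality.

(* Points of a strong subspace of the complement are pairwise collinear, and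
   collinear points of a Segre product differ in one coordinate only; so the
   subspace lies in a single fibre a[i/S_i], which turns (i) <-> (iii) into a
   statement about the factor M_i.  For (iii) -> (ii), a strong subspace X of
   M_i \ G is enlarged by all points on lines joining two points of X.  With
   four points per line there are always enough points off G to set up a Veblen
   configuration, and the Veblen condition then shows that this closure is a
   strong subspace of M_i; its trace off G is X. *)

Section LinearSpaces.
Context {P : Type} {Ls : (P -> Prop) -> Prop}.

Lemma lines_coincide {L K x y} : is_pls Ls -> Ls L -> Ls K -> x <> y ->
  L x -> L y -> K x -> K y -> same_set L K.
Proof.
move=> [_ [_ meet1]] HL HK nxy Lx Ly Kx Ky; apply: NNPP => nLK.
exact: nxy (meet1 L K HL HK nLK x y Lx Ly Kx Ky).
Qed.

Lemma collinear_sym {x y} : collinear Ls x y -> collinear Ls y x.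
Proof. by move=> [L [HL [Lx Ly]]]; exists L. Qed.

Lemma collinear_along_line {p L x y z} : gamma_space Ls -> Ls L -> x <> y ->
  L x -> L y -> L z -> collinear Ls p x -> collinear Ls p y -> collinear Ls p z.
Proof.
by move=> gam HL nxy Lx Ly Lz px py; exact: (proj2 (gam p)) L HL x y nxy Lx Ly px py z Lz.
Qed.

Lemma two_points_avoiding {L} a b : lines_ge4 Ls -> Ls L ->
  exists d1 d2, L d1 /\ L d2 /\ d1 <> d2 /\ d1 <> a /\ d1 <> b /\ d2 <> a /\ d2 <> b.
Proof.
move=> ge4 HL.
have [x1 [x2 [x3 [x4 [[L1 [L2 [L3 L4]]] [n12 [n13 [n14 [n23 [n24 n34]]]]]]]]]] := ge4 L HL.
have avoid x : (x = a \/ x = b) \/ (x <> a /\ x <> b).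
  by case: (classic (x = a)); case: (classic (x = b)); tauto.
case: (avoid x1) => [h1|[h1 h1']]; case: (avoid x2) => [h2|[h2 h2']];
  case: (avoid x3) => [h3|[h3 h3']]; case: (avoid x4) => [h4|[h4 h4']];
  try (exists x1, x2; by do !split);
  try (exists x1, x3; by do !split);
  try (exists x1, x4; by do !split);
  try (exists x2, x3; by do !split);
  try (exists x2, x4; by do !split);
  try (exists x3, x4; by do !split);
  exfalso; repeat match goal with h : _ \/ _ |- _ => destruct h end; subst; congruence.
Qed.

Lemma point_off_subspace {G L a} b : lines_ge4 Ls -> subspace allpts Ls G ->
  Ls L -> L a -> ~ G a -> exists w, L w /\ w <> a /\ w <> b /\ ~ G w.
Proof.
move=> ge4 [_ Gclosed] HL La Ga.
have [d1 [d2 [L1 [L2 [n12 [n1a [n1b [n2a n2b]]]]]]]] := two_points_avoiding a b ge4 HL.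
case: (classic (G d1)) => G1; last by exists d1.
case: (classic (G d2)) => G2; last by exists d2.
by case: Ga; exact: Gclosed L HL d1 d2 n12 L1 L2 G1 G2 a La.
Qed.

Lemma line_meets_subspace_once {G L x u v} : subspace allpts Ls G -> Ls L ->
  L x -> ~ G x -> L u -> L v -> G u -> G v -> u = v.
Proof.
move=> [_ Gclosed] HL Lx Gx Lu Lv Gu Gv; apply: NNPP => nuv.
exact: Gx (Gclosed L HL u v nuv Lu Lv Gu Gv x Lx).
Qed.

Lemma comp_line_of {G L x} : Ls L -> L x -> ~ G x ->
  comp_lines Ls G (fun w => L w /\ ~ G w).
Proof. by move=> HL Lx Gx; exists L; split=> //; split=> //; exists x. Qed.

Lemma comp_collinearP {G x y} : ~ G x -> ~ G y ->
  collinear (comp_lines Ls G) x y <-> collinear Ls x y.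
Proof.
move=> Gx Gy; split=> [[K [[L [HL [_ eK]]] [Kx Ky]]]|[L [HL [Lx Ly]]]].
  by exists L; split=> //; split; [exact: (proj1 (eK x) Kx).1 | exact: (proj1 (eK y) Ky).1].
by exists (fun w => L w /\ ~ G w); split; [exact: comp_line_of Lx Gx|].
Qed.

Lemma comp_subspaceP {G X} :
  subspace (comp_pts allpts G) (comp_lines Ls G) X <->
  (forall x, X x -> ~ G x) /\
  (forall L x y z, Ls L -> x <> y -> L x -> L y -> X x -> X y ->
     L z -> ~ G z -> X z).
Proof.
split=> [[Xpts Xclosed]|[Xoff Xclosed]].
  have Xoff x : X x -> ~ G x by move/Xpts => [].
  split=> // L x y z HL nxy Lx Ly Xx Xy Lz Gz.
  apply: (Xclosed _ (comp_line_of HL Lx (Xoff x Xx)) x y nxy) => //;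
    by split=> //; exact: Xoff.
split=> [x Xx|K [L [HL [_ eK]]] x y nxy Kx Ky Xx Xy z Kz]; first by split=> //; exact: Xoff.
have [Lx _] := proj1 (eK x) Kx; have [Ly _] := proj1 (eK y) Ky.
have [Lz Gz] := proj1 (eK z) Kz.
exact: Xclosed L x y z HL nxy Lx Ly Xx Xy Lz Gz.
Qed.

End LinearSpaces.

Definition line_closure {P : Type} (Ls : (P -> Prop) -> Prop) (X : P -> Prop) (z : P) :=
  X z \/ exists L x y, Ls L /\ x <> y /\ L x /\ L y /\ X x /\ X y /\ L z.

Section ComplementExtension.
Context {P : Type} {Ls : (P -> Prop) -> Prop} {G X : P -> Prop}.
Hypotheses (pls : is_pls Ls) (gam : gamma_space Ls) (veb : veblenian Ls)
  (ge4 : lines_ge4 Ls) (G_sub : subspace allpts Ls G)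
  (X_off : forall {x}, X x -> ~ G x)
  (X_closed : forall {L x y z}, Ls L -> x <> y -> L x -> L y -> X x -> X y ->
     L z -> ~ G z -> X z)
  (X_col : forall {x y}, X x -> X y -> collinear Ls x y).

Local Notation Y := (line_closure Ls X).

Lemma closure_off_G {z} : Y z -> ~ G z -> X z.
Proof.
case=> [//|[L [x [y [HL [nxy [Lx [Ly [Xx [Xy Lz]]]]]]]]]] Gz.
exact: X_closed HL nxy Lx Ly Xx Xy Lz Gz.
Qed.

Lemma closure_line {L x y z} : Ls L -> x <> y -> L x -> L y -> X x -> X y -> L z -> Y z.
Proof. by move=> HL nxy Lx Ly Xx Xy Lz; right; exists L, x, y. Qed.

Lemma collinear_X_closure {x g} : X x -> Y g -> collinear Ls x g.
Proof.
move=> Xx [Xg|[L [y1 [y2 [HL [n12 [L1 [L2 [X1 [X2 Lg]]]]]]]]]]; first exact: X_col.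
exact: collinear_along_line gam HL n12 L1 L2 Lg (X_col Xx X1) (X_col Xx X2).
Qed.

Lemma closure_collinear {g h} : Y g -> Y h -> collinear Ls g h.
Proof.
move=> Yg [Xh|[L [y1 [y2 [HL [n12 [L1 [L2 [X1 [X2 Lh]]]]]]]]]].
  exact/collinear_sym/collinear_X_closure.
exact: collinear_along_line gam HL n12 L1 L2 Lh
  (collinear_sym (collinear_X_closure X1 Yg)) (collinear_sym (collinear_X_closure X2 Yg)).
Qed.

(* q lies on a line m joining y1, y2 in X.  Unless m = l, take w in X on the
   line p y1 and z on l, both off G: Veblen at p for the lines l, p y1 and
   their transversals m, w z gives a point s of m and w z, which lies in X;
   hence so does z. *)
Lemma line_through_X_and_closure {l p q} : Ls l -> l p -> l q -> X p -> Y q -> G q ->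
  exists x y, x <> y /\ l x /\ l y /\ X x /\ X y.
Proof.
move=> Hl lp lq Xp Yq Gq.
have npq : p <> q by move=> epq; subst; exact: X_off Xp Gq.
case: (Yq) => [Xq|[m [y1 [y2 [Hm [n12 [m1 [m2 [X1 [X2 mq]]]]]]]]]];
  first by case: (X_off Xq).
case: (classic (same_set l m)) => [slm|nlm].
  by exists y1, y2; do !split=> //; apply/slm.
have nmp : ~ m p by move=> mp; exact: nlm (lines_coincide pls Hl Hm npq lp lq mp mq).
have ny1q : y1 <> q by move=> e; subst; exact: X_off X1 Gq.
have [L2 [HL2 [L2p L2y1]]] := X_col Xp X1.
have npy1 : p <> y1 by move=> e; subst; exact: nmp m1.
have [w [L2w [nwp [nwy1 Gw]]]] := point_off_subspace y1 ge4 G_sub HL2 L2p (X_off Xp).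
have Xw : X w := X_closed HL2 npy1 L2p L2y1 Xp X1 L2w Gw.
have [z [lz [nzp [nzq Gz]]]] := point_off_subspace q ge4 G_sub Hl lp (X_off Xp).
have [K [HK [Kw Kz]]] : collinear Ls w z.
  exact: collinear_along_line gam Hl npq lp lq lz (X_col Xw Xp) (collinear_X_closure Xw Yq).
have nlL2 : ~ same_set l L2.
  by move=> sl; apply: nlm; exact: lines_coincide pls Hl Hm ny1q ((sl y1).2 L2y1) lq m1 mq.
have nmK : ~ same_set m K.
  by move=> sm; apply: nlm; exact: lines_coincide pls Hl Hm nzq lz lq ((sm z).2 Kz) mq.
have nKp : ~ K p.
  move=> Kp; have sKl := lines_coincide pls HK Hl (nesym nzp) Kp Kz lp lz.
  exact: nlL2 (lines_coincide pls Hl HL2 (nesym nwp) lp ((sKl w).1 Kw) L2p L2w).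
have [s [ms Ks]] := veb p l L2 m K Hl HL2 Hm HK nlL2 lp L2p nmK nmp nKp
  (ex_intro _ q (conj mq lq)) (ex_intro _ y1 (conj m1 L2y1))
  (ex_intro _ z (conj Kz lz)) (ex_intro _ w (conj Kw L2w)).
have Gs : ~ G s.
  move=> Gs; have esq := line_meets_subspace_once G_sub Hm m1 (X_off X1) ms mq Gs Gq.
  subst s; apply: nKp.
  exact/(lines_coincide pls HK Hl (nesym nzq) Ks Kz lq lz).
have Xs : X s := X_closed Hm n12 m1 m2 X1 X2 ms Gs.
have nsw : s <> w.
  move=> esw; subst s; apply: nmp.
  exact/(lines_coincide pls Hm HL2 (nesym nwy1) m1 ms L2y1 L2w).
by exists p, z; do !split=> //; [exact: nesym | exact: X_closed HK nsw Ks Kw Xs Xw Kz Gz].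
Qed.

(* Here l lies in G.  p lies on a line m joining x, x' in X; Veblen at p for
   the lines l, m and their transversals x q, x' z gives a point s of both
   transversals, which lies in X by the previous lemma; so z is on the line
   joining s and x'. *)
Lemma closure_on_G_line {l p q z} : Ls l -> p <> q -> l p -> l q -> Y p -> Y q ->
  G p -> G q -> l z -> Y z.
Proof.
move=> Hl npq lp lq Yp Yq Gp Gq lz.
case: (classic (z = p)) => [->//|nzp]; case: (classic (z = q)) => [->//|nzq].
have nlX w : X w -> ~ l w.
  by move=> Xw lw; exact: X_off Xw ((proj2 G_sub) l Hl p q npq lp lq Gp Gq w lw).
case: Yp => [Xp|[m [x [x' [Hm [nxx' [mx [mx' [Xx [Xx' mp]]]]]]]]]];
  first by case: (nlX p Xp lp).
have [K1 [HK1 [K1x K1q]]] := collinear_X_closure Xx Yq.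
have [K2 [HK2 [K2x' K2z]]] : collinear Ls x' z.
  apply: collinear_along_line gam Hl npq lp lq lz _ (collinear_X_closure Xx' Yq).
  by exists m.
have nlm : ~ same_set l m by move=> s; apply: (nlX x Xx); apply/s.
have nmq : ~ m q.
  by move=> mq; apply: nlm; exact: lines_coincide pls Hl Hm npq lp lq mp mq.
have nK1x' : ~ K1 x'.
  by move=> K1x'; apply: nmq; exact/(lines_coincide pls HK1 Hm nxx' K1x K1x' mx mx').
have nK12 : ~ same_set K1 K2 by move=> s; apply: nK1x'; apply/s.
have nK1p : ~ K1 p.
  by move=> K1p; apply: (nlX x Xx); exact/(lines_coincide pls HK1 Hl npq K1p K1q lp lq).
have nK2p : ~ K2 p.
  move=> K2p; apply: (nlX x' Xx').
  exact/(lines_coincide pls HK2 Hl (nesym nzp) K2p K2z lp lz).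
have [s [K1s K2s]] := veb p l m K1 K2 Hl Hm HK1 HK2 nlm lp mp nK12 nK1p nK2p
  (ex_intro _ q (conj K1q lq)) (ex_intro _ x (conj K1x mx))
  (ex_intro _ z (conj K2z lz)) (ex_intro _ x' (conj K2x' mx')).
have Gs : ~ G s.
  move=> Gs; have esq := line_meets_subspace_once G_sub HK1 K1x (X_off Xx) K1s K1q Gs Gq.
  subst s; apply: nK2p.
  exact/(lines_coincide pls HK2 Hl (nesym nzq) K2s K2z lq lz).
have [y1 [y2 [ny [K1y1 [K1y2 [Xy1 Xy2]]]]]] :=
  line_through_X_and_closure HK1 K1x K1q Xx Yq Gq.
have Xs : X s := X_closed HK1 ny K1y1 K1y2 Xy1 Xy2 K1s Gs.
have nsx' : s <> x' by move=> e; subst s; exact: nK1x'.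
exact: closure_line HK2 nsx' K2s K2x' Xs Xx' K2z.
Qed.

Lemma closure_subspace {L p q z} : Ls L -> p <> q -> L p -> L q -> Y p -> Y q -> L z -> Y z.
Proof.
move=> HL npq Lp Lq Yp Yq Lz.
have two_X : (exists x y, x <> y /\ L x /\ L y /\ X x /\ X y) -> Y z.
  by move=> [x [y [nxy [Lx [Ly [Xx Xy]]]]]]; exact: closure_line HL nxy Lx Ly Xx Xy Lz.
case: (classic (G p)) => Gp; case: (classic (G q)) => Gq.
- exact: closure_on_G_line HL npq Lp Lq Yp Yq Gp Gq Lz.
- by apply: two_X; exact: line_through_X_and_closure HL Lq Lp (closure_off_G Yq Gq) Yp Gp.
- by apply: two_X; exact: line_through_X_and_closure HL Lp Lq (closure_off_G Yp Gp) Yq Gq.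
- by apply: two_X; exists p, q; do !split=> //; exact: closure_off_G.
Qed.

Lemma closure_strong : strong_subspace allpts Ls Y.
Proof.
split; last exact: @closure_collinear.
by split=> // L HL x y nxy Lx Ly Yx Yy z Lz; exact: closure_subspace HL nxy Lx Ly Yx Yy Lz.
Qed.

End ComplementExtension.

Lemma complement_strong_subspace_extends {P : Type} {Ls : (P -> Prop) -> Prop}
  {G X : P -> Prop} :
  is_pls Ls -> gamma_space Ls -> veblenian Ls -> lines_ge4 Ls -> subspace allpts Ls G ->
  strong_subspace (comp_pts allpts G) (comp_lines Ls G) X ->
  exists Y, strong_subspace allpts Ls Y /\ forall z, X z <-> Y z /\ ~ G z.
Proof.
move=> pls gam veb ge4 G_sub [/comp_subspaceP [X_off X_closed] X_col].
have X_col' x y : X x -> X y -> collinear Ls x y.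
  by move=> Xx Xy; apply/(comp_collinearP (X_off x Xx) (X_off y Xy)); exact: X_col.
exists (line_closure Ls X); split.
  exact: closure_strong pls gam veb ge4 G_sub X_off X_closed X_col'.
move=> z; split=> [Xz|[Yz Gz]]; first by split; [left | exact: X_off].
exact: (closure_off_G X_closed Yz Gz).
Qed.

Section SegreFibres.
Context {I : countType} {S : I -> Type} {Ls : forall i, (S i -> Prop) -> Prop}.
Implicit Types (a b c : forall j, S j).

Lemma upd_at a i x : upd a i x i = x.
Proof. by rewrite /upd; case: (i =P i) => [e|] //; rewrite (eq_irrelevance e (erefl i)). Qed.

Lemma upd_off a i x j : i <> j -> upd a i x j = a j.
Proof. by rewrite /upd; case: (i =P j). Qed.

Lemma upd_inj a i : injective (upd a i).
Proof. by move=> x y exy; rewrite -(upd_at a i x) -(upd_at a i y) exy. Qed.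

Lemma upd_agree a b i : (forall j, j <> i -> b j = a j) -> b = upd a i (b i).
Proof.
move=> ba; apply: functional_extensionality_dep => j.
case: (classic (i = j)) => [<-|nij]; first by rewrite upd_at.
by rewrite upd_off // ba //; exact: nesym.
Qed.

Lemma upd_id a i : upd a i (a i) = a.
Proof. by rewrite -upd_agree. Qed.

Lemma upd_set_upd a i (A : S i -> Prop) x : upd_set a i A (upd a i x) <-> A x.
Proof. by split=> [[y [Ay /upd_inj ->]] //|Ax]; exists x. Qed.

Lemma segre_line_upd a {i l} : Ls i l -> segre_lines Ls (upd_set a i l).
Proof. by move=> Hl; exists a, i, l. Qed.

Lemma segre_line_agree {K p q} : segre_lines Ls K -> K p -> K q ->
  exists k, forall j, j <> k -> p j = q j.
Proof.
move=> [c [k [l [_ eK]]]] /eK [u [_ ->]] /eK [v [_ ->]].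
by exists k => j njk; rewrite !upd_off //; exact: nesym.
Qed.

Lemma segre_line_in_fibre {K a i x y} : segre_lines Ls K -> x <> y ->
  K (upd a i x) -> K (upd a i y) -> exists2 l, Ls i l & forall b, K b <-> upd_set a i l b.
Proof.
move=> [c [k [l [Hl eK]]]] nxy /eK [u [_ eu]] /eK [v [_ ev]].
have eki : k = i.
  apply: NNPP => nki; apply: nxy.
  by rewrite -(upd_at a i x) -(upd_at a i y) eu ev !upd_off.
subst k.
have cw w : upd c i w = upd a i w.
  rewrite (upd_agree a (upd c i w) i) ?upd_at // => j /nesym nij.
  by rewrite upd_off // -(upd_off c i u j nij) -eu upd_off.
by exists l => // b; rewrite eK; split=> [[w [lw ->]]|[w [lw ->]]]; exists w; rewrite cw.
Qed.

Lemma hsec_subspace {H} a i :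
  subspace allpts (segre_lines Ls) H -> subspace allpts (Ls i) (hsec H a i).
Proof.
move=> [_ Hclosed]; split=> // l Hl x y nxy lx ly Hx Hy z lz.
apply: (Hclosed _ (segre_line_upd a Hl) (upd a i x) (upd a i y) _ _ _ Hx Hy (upd a i z));
  [by move/upd_inj | exact/upd_set_upd ..].
Qed.

Lemma complement_points_agree H X :
  strong_subspace (comp_pts allpts H) (comp_lines (segre_lines Ls) H) X ->
  forall p q, X p -> X q -> exists k, forall j, j <> k -> p j = q j.
Proof.
move=> [/comp_subspaceP [Xoff _] Xcol] p q Xp Xq.
have [K [HK [Kp Kq]]] := (comp_collinearP (Xoff p Xp) (Xoff q Xq)).1 (Xcol p q Xp Xq).
exact: segre_line_agree HK Kp Kq.
Qed.

(* a0 and i0 are only needed as witnesses when X has at most one point. *)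
Lemma complement_strong_in_fibre {H X} (a0 : forall j, S j) (i0 : I) :
  strong_subspace (comp_pts allpts H) (comp_lines (segre_lines Ls) H) X ->
  exists a i, forall c, X c -> c = upd a i (c i).
Proof.
move=> /complement_points_agree agree.
case: (classic (exists a, X a)) => [[a Xa]|noX]; last first.
  by exists a0, i0 => c Xc; case: noX; exists c.
case: (classic (exists b, X b /\ b <> a)) => [[b [Xb nba]]|single]; last first.
  exists a, i0 => c Xc; have -> : c = a by apply: NNPP => nca; apply: single; exists c.
  by rewrite upd_id.
have [i ab] := agree a b Xa Xb.
have nab : a i <> b i.
  move=> e; apply: nba; apply: functional_extensionality_dep => j.
  by case: (classic (j = i)) => [->|nji]; last rewrite ab.
exists a, i => c Xc; apply: upd_agree => m nmi; apply: NNPP => ncm.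
have [j aj] := agree a c Xa Xc; have [k bk] := agree b c Xb Xc.
have emj : m = j by apply: NNPP => nmj; exact: ncm (esym (aj m nmj)).
have emk : m = k.
  by apply: NNPP => nmk; exact: ncm (etrans (esym (bk m nmk)) (esym (ab m nmi))).
subst j k; have nim := nesym nmi.
exact: nab (etrans (aj i nim) (esym (bk i nim))).
Qed.

Lemma fibre_restriction_strong H X a i : is_pls (Ls i) ->
  strong_subspace (comp_pts allpts H) (comp_lines (segre_lines Ls) H) X ->
  strong_subspace (comp_pts allpts (hsec H a i)) (comp_lines (Ls i) (hsec H a i))
    (fun x => X (upd a i x)).
Proof.
move=> pls [/comp_subspaceP [Xoff Xclosed] Xcol].
have Xioff x : X (upd a i x) -> ~ hsec H a i x by exact: Xoff.
split.
  apply/comp_subspaceP; split=> // l x y z Hl nxy lx ly Xx Xy lz Hz.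
  apply: (Xclosed _ (upd a i x) (upd a i y) (upd a i z) (segre_line_upd a Hl)) => //;
    [by move/upd_inj | exact/upd_set_upd ..].
move=> x y Xx Xy; apply/(comp_collinearP (Xioff x Xx) (Xioff y Xy)).
case: (classic (x = y)) => [<-|nxy].
  by have [l [Hl lx]] := (proj1 (proj2 pls)) x; exists l.
have [K [HK [Kx Ky]]] :=
  (comp_collinearP (Xoff _ Xx) (Xoff _ Xy)).1 (Xcol _ _ Xx Xy).
have [l Hl eK] := segre_line_in_fibre HK nxy Kx Ky.
by exists l; split=> //; split; apply/(upd_set_upd a i); apply/eK.
Qed.

Definition fibre_complement_form H X := exists (a : forall j, S j) (i : I) (Xi : S i -> Prop),
  strong_subspace (comp_pts allpts (hsec H a i)) (comp_lines (Ls i) (hsec H a i)) Xi /\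
  (forall b, X b <-> upd_set a i Xi b).

Definition fibre_trace_form H X := exists (a : forall j, S j) (i : I) (Y : S i -> Prop),
  strong_subspace allpts (Ls i) Y /\ (forall b, X b <-> (upd_set a i Y b /\ ~ H b)).

Lemma fibre_complement_form_of_strong H X (a0 : forall j, S j) (i0 : I) :
  (forall i, is_pls (Ls i)) ->
  strong_subspace (comp_pts allpts H) (comp_lines (segre_lines Ls) H) X ->
  fibre_complement_form H X.
Proof.
move=> pls XS; have [a [i inX]] := complement_strong_in_fibre a0 i0 XS.
exists a, i, (fun x => X (upd a i x)); split; first exact: fibre_restriction_strong.
move=> b; split=> [Xb|[x [Xx ->]] //].
by exists (b i); rewrite -inX.
Qed.

Lemma strong_of_fibre_complement_form H X : fibre_complement_form H X ->
  strong_subspace (comp_pts allpts H) (comp_lines (segre_lines Ls) H) X.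
Proof.
move=> [a [i [Xi [[/comp_subspaceP [Xioff Xiclosed] Xicol] eX]]]].
have Xoff b : X b -> ~ H b by move=> /eX [x [Xx ->]]; exact: Xioff.
split.
  apply/comp_subspaceP; split=> // K p q z HK npq Kp Kq /eX [x [Xx ep]] /eX [y [Xy eq]] Kz Hz.
  subst p q; have nxy : x <> y by move=> exy; apply: npq; rewrite exy.
  have [l Hl eK] := segre_line_in_fibre HK nxy Kp Kq.
  have [w [lw ez]] := proj1 (eK z) Kz; subst z.
  apply/eX; exists w; split=> //.
  by apply: (Xiclosed l x y w Hl nxy) => //; apply/(upd_set_upd a i); apply/eK.
move=> p q /eX [x [Xx ->]] /eX [y [Xy ->]].
apply/(comp_collinearP (Xioff x Xx : ~ H _) (Xioff y Xy : ~ H _)).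
have [l [Hl [lx ly]]] := (comp_collinearP (Xioff x Xx) (Xioff y Xy)).1 (Xicol x y Xx Xy).
by exists (upd_set a i l); split; [exact: segre_line_upd | split; exact/upd_set_upd].
Qed.

Lemma fibre_complement_form_of_trace H X : fibre_trace_form H X -> fibre_complement_form H X.
Proof.
move=> [a [i [Y [[[_ Yclosed] Ycol] eX]]]].
exists a, i, (fun x => Y x /\ ~ hsec H a i x); split.
  split.
    apply/comp_subspaceP; split=> [x [] //|l x y z Hl nxy lx ly [Yx _] [Yy _] lz Hz].
    by split=> //; exact: Yclosed l Hl x y nxy lx ly Yx Yy z lz.
  by move=> x y [Yx Hx] [Yy Hy]; apply/(comp_collinearP Hx Hy); exact: Ycol.
move=> b; split=> [/eX [[y [Yy ->]] Hb]|[x [[Yx Hx] ->]]]; first by exists y.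
by apply/eX; split=> //; exists x.
Qed.

Lemma fibre_trace_form_of_complement H X :
  (forall i, is_pls (Ls i)) -> (forall i, gamma_space (Ls i)) ->
  (forall i, veblenian (Ls i)) -> (forall i, lines_ge4 (Ls i)) ->
  subspace allpts (segre_lines Ls) H ->
  fibre_complement_form H X -> fibre_trace_form H X.
Proof.
move=> pls gam veb ge4 Hsub [a [i [Xi [XiS eX]]]].
have [Y [YS eXi]] := complement_strong_subspace_extends (pls i) (gam i) (veb i) (ge4 i)
  (hsec_subspace a i Hsub) XiS.
exists a, i, Y; split=> // b; split=> [/eX [x [/eXi [Yx Hx] ->]]|[[y [Yy ->]] Hb]].
  by split=> //; exists x.
by apply/eX; exists y; split=> //; apply/eXi.
Qed.

End SegreFibres.

Theorem proposition3p11 (I : countType) (S : I -> Type)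
  (Ls : forall i, (S i -> Prop) -> Prop) :
  (exists i j : I, i <> j) ->
  (forall i, is_pls (Ls i)) ->
  (forall i, gamma_space (Ls i)) ->
  (forall i, veblenian (Ls i)) ->
  (forall i, lines_ge4 (Ls i)) ->
  forall H : (forall j, S j) -> Prop,
  hyperplane allpts (segre_lines Ls) H ->
  forall X : (forall j, S j) -> Prop,
  (strong_subspace (comp_pts allpts H) (comp_lines (segre_lines Ls) H) X <->
     exists (a : forall j, S j) (i : I) (Y : S i -> Prop),
       strong_subspace allpts (Ls i) Y /\
       (forall b, X b <-> (upd_set a i Y b /\ ~ H b))) /\
  (strong_subspace (comp_pts allpts H) (comp_lines (segre_lines Ls) H) X <->
     exists (a : forall j, S j) (i : I) (Xi : S i -> Prop),
       strong_subspace (comp_pts allpts (hsec H a i))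
                       (comp_lines (Ls i) (hsec H a i)) Xi /\
       (forall b, X b <-> upd_set a i Xi b)).
Proof.
move=> [i0 _] pls gam veb ge4 H [Hsub [[a0 _] _]] X.
have to_fibre := fibre_complement_form_of_strong H X a0 i0 pls.
split; split.
- by move/to_fibre; exact: fibre_trace_form_of_complement.
- by move/fibre_complement_form_of_trace; exact: strong_of_fibre_complement_form.
- exact: to_fibre.
- exact: strong_of_fibre_complement_form.
Qed.
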